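(* Let $\mathcal{A}=\{\mathcal{U}_n\}_{n\in\mathbb{N}}$ be a defining sequence of a space $X$. Then $\mathcal{A}$ equipped with the ultrametric $u_{\mathcal{A}}$ is tame. Furthermore, $\mathcal{A}$ equipped with an admissible metric $d$ is tame if and only if $d$ is uniformly equivalent to $u_{\mathcal{A}}$.
   Context: Spaces are nonempty separable metrizable. A partition is a cover by pairwise disjoint nonempty clopen sets; $\mathcal{U}[x]$ is the element of $\mathcal{U}$ containing $x$. A defining sequence is a sequence $\{\mathcal{U}_n\}$ of partitions, each refining the previous, whose union is a basis of the topology. $u_{\mathcal{A}}(x,y)=1/(1+j)$ with $j=\inf\{n:\mathcal{U}_n[x]\ne\mathcal{U}_n[y]\}$ ($u_{\mathcal{A}}(x,x)=0$). $\mathcal{A}$ with a metric $d$ is tame if $S_n=\sup\{\operatorname{diam}_d(O):O\in\mathcal{U}_n\}\to0$ and for each $n$ there is $\rho_n>0$ with $d(x_1,x_2)\ge\rho_n$ whenever $x_1,x_2$ are in distinct elements of $\mathcal{U}_n$. Metrics $d_1,d_2$ are uniformly equivalent if the identity maps $(X,d_1)\to(X,d_2)$ and $(X,d_2)\to(X,d_1)$ are uniformly continuous. *)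

From HB Require Import structures.
From mathcomp Require Import all_boot all_order all_algebra.
From mathcomp Require Import all_classical all_reals topology.
Set Implicit Arguments. Unset Strict Implicit. Unset Printing Implicit Defensive.
Import Order.TTheory GRing.Theory Num.Theory.
Local Open Scope classical_set_scope.
Local Open Scope ring_scope.

Section Defs.
Variables (R : realType) (X : topologicalType).

Definition is_metric (d : X -> X -> R) : Prop :=
  (forall x y, 0 <= d x y) /\ (forall x y, d x y = 0 <-> x = y) /\
  (forall x y, d x y = d y x) /\ (forall x y z, d x z <= d x y + d y z).

Definition admissible (d : X -> X -> R) : Prop :=
  is_metric d /\
  forall A : set X, open A <->
    (forall x, A x -> exists2 e : R, 0 < e & forall y, d x y < e -> A y).

Definition nonempty_separable_metrizable : Prop :=
  (exists x : X, True) /\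
  (exists D : set X, countable D /\ dense D) /\
  (exists d : X -> X -> R, admissible d).

Definition is_partition (P : set (set X)) : Prop :=
  (forall O, P O -> O !=set0 /\ open O /\ closed O) /\
  (forall O1 O2, P O1 -> P O2 -> O1 <> O2 -> O1 `&` O2 = set0) /\
  (forall x, exists O, P O /\ O x).

Definition cell (P : set (set X)) (x : X) : set X :=
  xget setT [set O | P O /\ O x].

Definition defining_sequence (U : nat -> set (set X)) : Prop :=
  (forall n, is_partition (U n)) /\
  (forall n O, U n.+1 O -> exists2 O', U n O' & O `<=` O') /\
  (forall A : set X, open A -> forall x, A x ->
     exists n, exists2 O, U n O & O x /\ O `<=` A).

(* u_A(x,y) = 1/(1+j), j = inf{n | U_n[x] <> U_n[y]} (and 0 if no such n,
   in particular u_A(x,x) = 0) *)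
Definition uA (U : nat -> set (set X)) (x y : X) : R :=
  match pselect (exists n, asbool (cell (U n) x <> cell (U n) y)) with
  | left h => 1 / (1 + (ex_minn h)%:R)
  | right _ => 0
  end.

(* tameness of (U, d): S_n = sup_{O in U_n} diam_d O tends to 0, and
   for each n a positive separation rho_n between distinct cells. *)
Definition tame (U : nat -> set (set X)) (d : X -> X -> R) : Prop :=
  (forall e : R, 0 < e -> exists N, forall n, (N <= n)%N ->
     forall O, U n O -> forall x y, O x -> O y -> d x y <= e) /\
  (forall n, exists2 rho : R, 0 < rho &
     forall O1 O2, U n O1 -> U n O2 -> O1 <> O2 ->
     forall x1 x2, O1 x1 -> O2 x2 -> rho <= d x1 x2).

Definition unif_cont_id (d1 d2 : X -> X -> R) : Prop :=
  forall e : R, 0 < e -> exists2 delta : R, 0 < delta &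
    forall x y, d1 x y < delta -> d2 x y < e.

Definition unif_equiv (d1 d2 : X -> X -> R) : Prop :=
  unif_cont_id d1 d2 /\ unif_cont_id d2 d1.

End Defs.

(* Writing u for u_A and r n := 1/(1+n), one has u x y < r n exactly when x
   and y lie in the same cell of U_n, because the partitions refine each
   other.  Hence the two halves of tameness of (U, d) are the two halves of
   uniform equivalence: the vanishing of the diameters of the cells of U_n
   says that u-closeness forces d-closeness, and a positive separation of the
   cells of U_n says that d-closeness forces u-closeness.  This uses nothing
   about d. *)
From HB Require Import structures.
From mathcomp Require Import all_boot all_order all_algebra.
From mathcomp Require Import all_classical all_reals topology.
Import Order.TTheory GRing.Theory Num.Theory.
Local Open Scope classical_set_scope.
Local Open Scope ring_scope.

Section Partitions.
Context {X : topologicalType} {P : set (set X)}.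
Hypothesis partP : is_partition P.

Lemma cell_eq {O : set X} {x : X} : P O -> O x -> cell P x = O.
Proof.
have [_ [disj _]] := partP; move=> PO Ox; apply: xget_unique => // O' [PO' O'x].
apply: contrapT => neqO; have := disj _ _ PO' PO neqO.
by rewrite -subset0 => /(_ x); apply.
Qed.

Lemma cellP (x : X) : P (cell P x) /\ cell P x x.
Proof.
have [_ [_ cover]] := partP; have [O [PO Ox]] := cover x.
by apply: (@xgetPex _ setT [set O | P O /\ O x]); exists O.
Qed.

Lemma cell_eqP (x y : X) : cell P x = cell P y <-> cell P x y.
Proof.
split=> [->|]; first by have [] := cellP y.
by have [Px _] := cellP x => /(cell_eq Px) ->.
Qed.

Lemma same_cell {O : set X} {x y : X} :
  P O -> O x -> O y -> cell P x = cell P y.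
Proof. by move=> PO Ox Oy; rewrite (cell_eq PO Ox) (cell_eq PO Oy). Qed.

Lemma diff_cell {O1 O2 : set X} {x1 x2 : X} :
  P O1 -> P O2 -> O1 <> O2 -> O1 x1 -> O2 x2 -> cell P x1 <> cell P x2.
Proof. by move=> PO1 PO2 neqO Ox1 Ox2; rewrite (cell_eq PO1 Ox1) (cell_eq PO2 Ox2). Qed.

End Partitions.

Section DepthDistance.
Context {R : realType}.

Definition depth_dist (n : nat) : R := 1 / (1 + n%:R).

Lemma depth_dist_gt0 n : 0 < depth_dist n.
Proof. by rewrite /depth_dist nat1r divr_gt0 // ltr0Sn. Qed.

Lemma ltr_depth_dist m n : (depth_dist n < depth_dist m) = (m < n)%N.
Proof.
by rewrite /depth_dist !nat1r !div1r ltf_pV2 ?posrE ?ltr0Sn // ltr_nat ltnS.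
Qed.

Lemma ler_depth_dist m n : (depth_dist n <= depth_dist m) = (m <= n)%N.
Proof. by rewrite leNgt ltr_depth_dist -leqNgt. Qed.

Lemma depth_dist_small {e : R} : 0 < e -> exists N, depth_dist N < e.
Proof.
move=> e_gt0; exists (Num.truncn e^-1).
rewrite /depth_dist nat1r div1r -[e]invrK ltf_pV2 ?posrE ?invr_gt0 ?ltr0Sn //.
by rewrite invrK truncnS_gt.
Qed.

End DepthDistance.

Section DefiningSequence.
Variables (R : realType) (X : topologicalType) (U : nat -> set (set X)).
Hypothesis defU : defining_sequence U.

Let partU n : is_partition (U n) := defU.1 n.

Lemma cell_eq_le (m n : nat) (x y : X) : (m <= n)%N ->
  cell (U n) x = cell (U n) y -> cell (U m) x = cell (U m) y.
Proof.
have [_ [refU _]] := defU.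
move=> /subnK <-; elim: (n - m)%N => [//|k IHk] /(cell_eqP (partU _)) yx.
apply: IHk; rewrite addSn in yx.
have [Ux xx] := cellP (partU (k + m).+1) x.
have [O UO sub] := refU _ _ Ux.
rewrite (cell_eq (partU _) UO (sub _ xx)).
exact/esym/(cell_eq (partU _) UO)/sub.
Qed.

Lemma uA_lt_depth_dist (n : nat) (x y : X) :
  @uA R X U x y < depth_dist n <-> cell (U n) x = cell (U n) y.
Proof.
rewrite /uA; case: pselect => [ex|nex]; last first.
  split=> [_|]; last by move=> _; exact: depth_dist_gt0.
  by apply: contrapT => neq; apply: nex; exists n; apply/asboolP.
case: ex_minnP => j /asboolP neq_j min_j; rewrite -/(depth_dist j) ltr_depth_dist.
split=> [lt_nj|eq_n].
  by apply: contrapT => neq; move: lt_nj; rewrite ltnNge min_j //; apply/asboolP.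
by rewrite ltnNge; apply/negP => le_jn; apply: neq_j; exact: cell_eq_le eq_n.
Qed.

Definition vanishing_mesh (d : X -> X -> R) : Prop :=
  forall e : R, 0 < e -> exists N, forall n, (N <= n)%N ->
    forall O, U n O -> forall x y, O x -> O y -> d x y <= e.

Definition separated_cells (d : X -> X -> R) : Prop :=
  forall n, exists2 rho : R, 0 < rho &
    forall O1 O2, U n O1 -> U n O2 -> O1 <> O2 ->
    forall x1 x2, O1 x1 -> O2 x2 -> rho <= d x1 x2.

Lemma vanishing_meshP (d : X -> X -> R) :
  vanishing_mesh d <-> unif_cont_id (@uA R X U) d.
Proof.
split=> [mesh e e_gt0|ucont e e_gt0].
  have [N meshN] := mesh (e / 2) (divr_gt0 e_gt0 (ltr0Sn R 1)).
  exists (depth_dist N); first exact: depth_dist_gt0.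
  move=> x y /uA_lt_depth_dist /(cell_eqP (partU N)) yx.
  have [UNx xx] := cellP (partU N) x.
  apply: le_lt_trans (meshN N (leqnn N) _ UNx _ _ xx yx) _.
  by rewrite ltr_pdivrMr // ltr_pMr // ltr1n.
have [delta delta_gt0 close] := ucont e e_gt0.
have [N lt_N] := depth_dist_small delta_gt0.
exists N => n le_Nn O UO x y Ox Oy; apply/ltW/close.
have /uA_lt_depth_dist lt_n := same_cell (partU n) UO Ox Oy.
by apply: lt_trans lt_n (le_lt_trans _ lt_N); rewrite ler_depth_dist.
Qed.

Lemma separated_cellsP (d : X -> X -> R) :
  separated_cells d <-> unif_cont_id d (@uA R X U).
Proof.
split=> [sep e e_gt0|ucont n].
  have [n lt_n] := depth_dist_small e_gt0.
  have [rho rho_gt0 sep_n] := sep n; exists rho => // x y lt_rho.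
  apply: lt_trans lt_n; apply/uA_lt_depth_dist; apply: contrapT => neq.
  have [UNx xx] := cellP (partU n) x; have [UNy yy] := cellP (partU n) y.
  by have := sep_n _ _ UNx UNy neq _ _ xx yy; rewrite leNgt lt_rho.
have [delta delta_gt0 close] := ucont _ (depth_dist_gt0 n).
exists delta => // O1 O2 UO1 UO2 neqO x1 x2 Ox1 Ox2.
rewrite leNgt; apply/negP => /close /uA_lt_depth_dist.
exact: (diff_cell (partU n) UO1 UO2 neqO Ox1 Ox2).
Qed.

Lemma tame_unif_equiv (d : X -> X -> R) :
  tame U d <-> unif_equiv d (@uA R X U).
Proof.
rewrite /tame -/(vanishing_mesh d) -/(separated_cells d).
rewrite /unif_equiv vanishing_meshP separated_cellsP.
by split=> -[].
Qed.

End DefiningSequence.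

Lemma unif_cont_id_refl (R : realType) (X : topologicalType) (d : X -> X -> R) :
  unif_cont_id d d.
Proof. by move=> e e_gt0; exists e. Qed.

Theorem proposition3p9 (R : realType) (X : topologicalType)
    (U : nat -> set (set X)) :
  nonempty_separable_metrizable R X ->
  defining_sequence U ->
  tame U (@uA R X U) /\
  (forall d : X -> X -> R, admissible d ->
     (tame U d <-> unif_equiv d (@uA R X U))).
Proof.
move=> _ defU; split=> [|d _]; last exact: tame_unif_equiv.
by apply/tame_unif_equiv => //; split; exact: unif_cont_id_refl.
Qed.
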